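(* Let $\delta\ge0$ and edge weights $\omega_{jk}\in\mathbb{R}$ for $j\in[d\ell]$, $k\in[\ell]$. The optimal value of program $(P'')$ is at least the weight of the maximum weight $d$-to-$1$ matching in the complete bipartite graph between LHS-nodes $[d\ell]$ and RHS-nodes $[\ell]$ with weights $\omega$.
   Context: Program $(P'')$: maximize $\sum_{j,k}x_{jk}\omega_{jk}-\delta\sum_{j,k}(x_{jk}\log x_{jk}+y_{jk}\log y_{jk})$ subject to $\sum_j(x_{jk}+y_{jk})\le d$ for all $k\in[\ell]$, $\sum_k(x_{jk}+y_{jk})=1$ for all $j\in[d\ell]$, $x_{jk},y_{jk}\in[0,1]$ (with $0\log0=0$). A $d$-to-$1$ matching matches each LHS-node to at most one RHS-node and each RHS-node to at most $d$ LHS-nodes; its weight is the sum of weights of matched edges. *)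

From HB Require Import structures.
From mathcomp Require Import all_boot all_order all_algebra.
From mathcomp Require Import all_classical all_reals exp.
Set Implicit Arguments. Unset Strict Implicit. Unset Printing Implicit Defensive.
Import Order.TTheory GRing.Theory Num.Theory.
Local Open Scope ring_scope.
Local Open Scope classical_set_scope.

Definition xlogx {R : realType} (t : R) : R := if t == 0 then 0 else t * ln t.

Section P2.
Context {R : realType} (d l : nat).
Notation LHS := 'I_(d * l).
Notation RHS := 'I_l.

Definition obj (delta : R) (w : LHS -> RHS -> R) (x y : LHS -> RHS -> R) : R :=
  \sum_(j : LHS) \sum_(k : RHS) x j k * w j k
  - delta * \sum_(j : LHS) \sum_(k : RHS) (xlogx (x j k) + xlogx (y j k)).

Definition feasible (x y : LHS -> RHS -> R) : Prop :=
  [/\ forall k : RHS, \sum_(j : LHS) (x j k + y j k) <= d%:R,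
      forall j : LHS, \sum_(k : RHS) (x j k + y j k) = 1,
      forall j k, 0 <= x j k <= 1 &
      forall j k, 0 <= y j k <= 1].

Definition opt_value (delta : R) (w : LHS -> RHS -> R) : R :=
  sup [set v | exists x y, feasible x y /\ v = obj delta w x y].

Definition d_to_1_matching (M : {set LHS * RHS}) : Prop :=
  (forall j : LHS, #|[set k : RHS | (j, k) \in M]| <= 1)%N /\
  (forall k : RHS, #|[set j : LHS | (j, k) \in M]| <= d)%N.

Definition matching_weight (w : LHS -> RHS -> R) (M : {set LHS * RHS}) : R :=
  \sum_(e in M) w e.1 e.2.

End P2.

From HB Require Import structures.
From mathcomp Require Import all_boot all_order all_algebra.
From mathcomp Require Import all_classical all_reals exp.
Import Order.TTheory GRing.Theory Num.Theory.
Local Open Scope ring_scope.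

(* The indicator vector x of a d-to-1 matching has row sums at most 1 and
   column sums at most d.  Spreading the slack proportionally,
   y j k := (1 - row sum j) * (d - column sum k) / U, where U is the total slack
   (counted either by rows or by columns, since there are d * l rows), yields a
   feasible point (x, y) whose linear part is the weight of the matching.  As all
   entries lie in [0, 1], the entropy terms are nonpositive, so the objective at
   (x, y) is at least that weight; they are also at least -1, so the objective
   is bounded above on the feasible region and its supremum dominates the value
   at (x, y). *)

Section XLogX.
Variable R : realType.

Lemma xlogx_le0 (t : R) : 0 <= t <= 1 -> xlogx t <= 0.
Proof.
move=> /andP[t0 t1]; rewrite /xlogx; case: eqP => // _.
by rewrite mulr_ge0_le0 // ln_le0.
Qed.

Lemma xlogx_geN1 (t : R) : 0 <= t <= 1 -> -1 <= xlogx t.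
Proof.
move=> /andP[t0 t1]; rewrite /xlogx; case: eqP => [_|/eqP tn0]; first by rewrite lerN10.
have tp : 0 < t by rewrite lt0r tn0.
have ln_invt : ln (1 + (t^-1 - 1)) <= t^-1 - 1.
  by rewrite le_ln1Dx // ltrBrDl subrr invr_gt0.
rewrite addrC subrK lnV ?posrE // in ln_invt.
have : t * - ln t <= t * (t^-1 - 1) by rewrite ler_wpM2l.
rewrite mulrBr mulfV // mulr1 mulrN lerNl => tlnt_ge.
by rewrite (le_trans _ tlnt_ge) // lerN2 lerBlDr lerDl.
Qed.

End XLogX.

Section ProgramP2.
Context {R : realType} {d l : nat}.
Notation LHS := 'I_(d * l).
Notation RHS := 'I_l.

Definition in_box (x : LHS -> RHS -> R) := forall j k, 0 <= x j k <= 1.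

Lemma linear_part_le_obj (delta : R) (w x y : LHS -> RHS -> R) :
  0 <= delta -> in_box x -> in_box y ->
  \sum_j \sum_k x j k * w j k <= obj delta w x y.
Proof.
move=> delta0 x01 y01; rewrite /obj lerDl -mulrN mulr_ge0 //.
rewrite oppr_ge0; apply: sumr_le0 => j _; apply: sumr_le0 => k _.
by rewrite -[0]addr0 lerD // xlogx_le0.
Qed.

Lemma obj_le_abs_weight (delta : R) (w x y : LHS -> RHS -> R) :
  0 <= delta -> in_box x -> in_box y ->
  obj delta w x y <= \sum_j \sum_k `|w j k| + delta * \sum_(j : LHS) \sum_(k : RHS) 2.
Proof.
move=> delta0 x01 y01; rewrite /obj lerD //.
  apply: ler_sum => j _; apply: ler_sum => k _.
  have /andP[x0 x1] := x01 j k.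
  by rewrite (le_trans (ler_norm _)) // normrM ger0_norm // ler_piMl.
rewrite -mulrN ler_wpM2l // -sumrN; apply: ler_sum => j _.
rewrite -sumrN; apply: ler_sum => k _.
by rewrite lerNl -[2]/(1 + 1) opprD lerD // xlogx_geN1.
Qed.

Lemma obj_le_opt_value (delta : R) (w x y : LHS -> RHS -> R) :
  0 <= delta -> feasible x y -> obj delta w x y <= opt_value delta w.
Proof.
move=> delta0 xy_feas; apply: ub_le_sup; last by exists x, y.
exists (\sum_j \sum_k `|w j k| + delta * \sum_(j : LHS) \sum_(k : RHS) 2).
by move=> _ [x' [y' [[_ _ x'01 y'01] ->]]]; apply: obj_le_abs_weight.
Qed.

Definition row_slack (x : LHS -> RHS -> R) (j : LHS) := 1 - \sum_k x j k.
Definition col_slack (x : LHS -> RHS -> R) (k : RHS) := d%:R - \sum_j x j k.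

(* If the total slack vanishes, the junk value [_ / 0 = 0] gives [y = 0], which is
   still right: every row is then saturated. *)
Definition slack_fill (x : LHS -> RHS -> R) (j : LHS) (k : RHS) :=
  row_slack x j * (col_slack x k / \sum_k' col_slack x k').

Lemma sum_row_slack (x : LHS -> RHS -> R) :
  \sum_j row_slack x j = \sum_k col_slack x k.
Proof.
rewrite !sumrB exchange_big !sumr_const !card_ord.
by rewrite natrM mulr_natr.
Qed.

Section SlackFill.
Variable x : LHS -> RHS -> R.
Hypothesis x01 : in_box x.
Hypothesis row_le1 : forall j, \sum_k x j k <= 1.
Hypothesis col_led : forall k, \sum_j x j k <= d%:R.

Let U := \sum_k col_slack x k.

Let row_slack_ge0 j : 0 <= row_slack x j.
Proof. by rewrite subr_ge0. Qed.

Let col_slack_ge0 k : 0 <= col_slack x k.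
Proof. by rewrite subr_ge0. Qed.

Let U_ge0 : 0 <= U.
Proof. exact: sumr_ge0. Qed.

Lemma slack_fill_box : in_box (slack_fill x).
Proof.
move=> j k.
have ratio_le1 : col_slack x k / U <= 1.
  have [->|Un0] := eqVneq U 0; first by rewrite invr0 mulr0.
  rewrite ler_pdivrMr ?lt0r ?Un0 // mul1r /U (bigD1 k) //= lerDl.
  exact: sumr_ge0.
rewrite mulr_ge0 ?divr_ge0 //= -[1]mulr1 ler_pM ?divr_ge0 //.
by rewrite lerBlDr lerDl sumr_ge0 // => k' _; case/andP: (x01 j k').
Qed.

Lemma row_sum_slack_fill j : \sum_k (x j k + slack_fill x j k) = 1.
Proof.
rewrite big_split /= -mulr_sumr -mulr_suml -/U.
have [U0|Un0] := eqVneq U 0.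
  have /eqP : \sum_j row_slack x j = 0 by rewrite sum_row_slack.
  rewrite psumr_eq0 // => /allP /(_ j (mem_index_enum _)).
  by rewrite /row_slack subr_eq0 => /eqP <-; rewrite subrr mul0r addr0.
by rewrite mulfV // mulr1 addrC subrK.
Qed.

Lemma col_sum_slack_fill k : \sum_j (x j k + slack_fill x j k) <= d%:R.
Proof.
rewrite big_split /= -mulr_suml sum_row_slack -/U.
have [->|Un0] := eqVneq U 0; first by rewrite invr0 mulr0 mul0r addr0.
by rewrite mulrCA mulfV // mulr1 addrC subrK.
Qed.

Lemma feasible_slack_fill : feasible x (slack_fill x).
Proof.
split => //; [exact: col_sum_slack_fill | exact: row_sum_slack_fill |].
exact: slack_fill_box.
Qed.

End SlackFill.

Definition edge_indicator (M : {set LHS * RHS}) (j : LHS) (k : RHS) : R :=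
  ((j, k) \in M)%:R.

Lemma edge_indicator_box M : in_box (edge_indicator M).
Proof. by move=> j k; rewrite /edge_indicator; case: ((j, k) \in M); rewrite ?ler01 ?lexx. Qed.

Lemma sum_indicator_card (T : finType) (A : {pred T}) :
  \sum_(t : T) (t \in A)%:R = #|A|%:R :> R.
Proof.
rewrite -sum1_card natr_sum [X in _ = X]big_mkcond; apply: eq_bigr => t _.
by case: (t \in A).
Qed.

Lemma edge_indicator_row_sum M j :
  \sum_k edge_indicator M j k = #|[set k | (j, k) \in M]%classic|%:R.
Proof.
rewrite -sum_indicator_card; apply: eq_bigr => k _.
by rewrite /edge_indicator; congr ((nat_of_bool _)%:R); apply/idP/idP; rewrite in_setE.
Qed.

Lemma edge_indicator_col_sum M k :
  \sum_j edge_indicator M j k = #|[set j | (j, k) \in M]%classic|%:R.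
Proof.
rewrite -sum_indicator_card; apply: eq_bigr => j _.
by rewrite /edge_indicator; congr ((nat_of_bool _)%:R); apply/idP/idP; rewrite in_setE.
Qed.

Lemma matching_weightE (w : LHS -> RHS -> R) M :
  matching_weight w M = \sum_j \sum_k edge_indicator M j k * w j k.
Proof.
rewrite /matching_weight big_mkcond pair_big /=; apply: eq_bigr => [[j k]] _ /=.
by rewrite /edge_indicator; case: ((j, k) \in M); rewrite ?mul1r ?mul0r.
Qed.

End ProgramP2.

Theorem mainTheorem9 (R : realType) (d l : nat) (delta : R)
    (w : 'I_(d * l) -> 'I_l -> R) :
  0 <= delta ->
  forall M : {set 'I_(d * l) * 'I_l},
    @d_to_1_matching d l M -> @matching_weight R d l w M <= @opt_value R d l delta w.
Proof.
move=> delta0 M [row_card col_card].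
pose x := @edge_indicator R d l M.
have x01 : in_box x := edge_indicator_box M.
have row_le1 j : \sum_k x j k <= 1.
  by rewrite edge_indicator_row_sum -[1]/(1%:R) ler_nat.
have col_led k : \sum_j x j k <= d%:R.
  by rewrite edge_indicator_col_sum ler_nat.
have xy_feas := feasible_slack_fill x x01 row_le1 col_led.
apply: le_trans (obj_le_opt_value _ w _ _ delta0 xy_feas).
rewrite matching_weightE.
exact: linear_part_le_obj _ w _ _ delta0 x01 (slack_fill_box x x01 row_le1 col_led).
Qed.
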